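(* Consider BALM applied to $\min_{x\in\mathcal{X}} f(x)$ s.t. $Ax=b$ (with $\Lambda=\mathbb{R}^m$) or s.t. $Ax\le b$ (with $\Lambda=\mathbb{R}^m_+$), with parameters $\eta_k>0$, and define for $T\ge1$ $$\tilde x_T=\frac{\sum_{k=0}^{T-1}\eta_k x_{k+1}}{\sum_{k=0}^{T-1}\eta_k},\qquad \tilde\lambda_T=\frac{\sum_{k=0}^{T-1}\eta_k \lambda_{k+1}}{\sum_{k=0}^{T-1}\eta_k}.$$ Then for all $x\in\mathcal{X}$, $\lambda\in\Lambda$, $$L(\tilde x_T,\lambda)-L(x,\tilde\lambda_T)\le\frac{D_h(\lambda,\lambda_0)}{\sum_{k=0}^{T-1}\eta_k},$$ and, if $x^*$ is an optimal solution of the primal problem, for all $\lambda\in\Lambda$, $$f(\tilde x_T)-f(x^* )+\lambda^\top(A\tilde x_T-b)\le\frac{D_h(\lambda,\lambda_0)}{\sum_{k=0}^{T-1}\eta_k}.$$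
   Context: $f$ is closed, convex (and coercive), $\mathcal{X}\subseteq\mathbb{R}^n$ closed convex, $A\in\mathbb{R}^{m\times n}$, $b\in\mathbb{R}^m$, $L(x,\lambda)=f(x)+\lambda^\top(Ax-b)$. $h:\Lambda\to\mathbb{R}$ is proper, coercive, strictly convex and continuously differentiable on $\Lambda$; $D_h(\lambda,\tilde\lambda)=h(\lambda)-h(\tilde\lambda)-\nabla h(\tilde\lambda)^\top(\lambda-\tilde\lambda)$. BALM: given $\lambda_0\in\Lambda$, for $k\ge0$, $(x_{k+1},\lambda_{k+1})\in\mathcal{X}\times\Lambda$ is a saddle point on $\mathcal{X}\times\Lambda$ (min in $x$, max in $\lambda$) of $L(x,\lambda)-\frac1{\eta_k}D_h(\lambda,\lambda_k)$ (assumed to exist). *)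

From mathcomp Require Import all_boot.
From Stdlib Require Import Reals.
Set Implicit Arguments.
Unset Strict Implicit.
Open Scope R_scope.

Definition vec (n : nat) := 'I_n -> R.
Definition mat (m n : nat) := 'I_m -> 'I_n -> R.

Definition dot (n : nat) (u v : vec n) : R := \big[Rplus/0]_(i < n) (u i * v i).
Definition vnorm (n : nat) (u : vec n) : R := sqrt (dot u u).
Definition vsub (n : nat) (u v : vec n) : vec n := fun i => u i - v i.
Definition mulv (m n : nat) (A : mat m n) (x : vec n) : vec m :=
  fun i => \big[Rplus/0]_(j < n) (A i j * x j).

Definition vconvex_set (n : nat) (X : vec n -> Prop) : Prop :=
  forall x y t, X x -> X y -> 0 <= t <= 1 ->
    X (fun i => t * x i + (1 - t) * y i).
Definition vclosed_set (n : nat) (X : vec n -> Prop) : Prop :=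
  forall x, (forall eps, 0 < eps -> exists y, X y /\ vnorm (vsub y x) < eps) -> X x.

Definition convex_fun (n : nat) (f : vec n -> R) : Prop :=
  forall x y t, 0 <= t <= 1 ->
    f (fun i => t * x i + (1 - t) * y i) <= t * f x + (1 - t) * f y.
(* closed = lower semicontinuous (f real valued) *)
Definition lsc_fun (n : nat) (f : vec n -> R) : Prop :=
  forall x eps, 0 < eps -> exists delta, 0 < delta /\
    forall y, vnorm (vsub y x) < delta -> f x - eps < f y.
Definition coercive_on (n : nat) (S : vec n -> Prop) (f : vec n -> R) : Prop :=
  forall M, exists r, forall x, S x -> r < vnorm x -> M < f x.
Definition strictly_convex_on (n : nat) (S : vec n -> Prop) (f : vec n -> R) : Prop :=
  forall x y t, S x -> S y -> x <> y -> 0 < t < 1 ->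
    f (fun i => t * x i + (1 - t) * y i) < t * f x + (1 - t) * f y.
Definition gradient_on (n : nat) (S : vec n -> Prop) (h : vec n -> R)
  (g : vec n -> vec n) : Prop :=
  forall l, S l -> forall eps, 0 < eps -> exists delta, 0 < delta /\
    forall mu, S mu -> vnorm (vsub mu l) < delta ->
      Rabs (h mu - h l - dot (g l) (vsub mu l)) <= eps * vnorm (vsub mu l).
Definition vcontinuous_on (n : nat) (S : vec n -> Prop) (g : vec n -> vec n) : Prop :=
  forall l, S l -> forall eps, 0 < eps -> exists delta, 0 < delta /\
    forall mu, S mu -> vnorm (vsub mu l) < delta -> vnorm (vsub (g mu) (g l)) < eps.

Definition Dh (m : nat) (h : vec m -> R) (gh : vec m -> vec m) (l lt : vec m) : R :=
  h l - h lt - dot (gh lt) (vsub l lt).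

Definition Lag (m n : nat) (f : vec n -> R) (A : mat m n) (b : vec m)
  (x : vec n) (l : vec m) : R := f x + dot l (vsub (mulv A x) b).

(* ineq = false : constraint Ax = b, Lambda = R^m;
   ineq = true  : constraint Ax <= b, Lambda = R^m_+ *)
Definition Lambda (m : nat) (ineq : bool) (l : vec m) : Prop :=
  if ineq then forall i, 0 <= l i else True.
Definition feasible (m n : nat) (ineq : bool) (A : mat m n) (b : vec m) (x : vec n) : Prop :=
  if ineq then forall i, mulv A x i <= b i else forall i, mulv A x i = b i.
Definition primal_optimal (m n : nat) (ineq : bool) (f : vec n -> R) (X : vec n -> Prop)
  (A : mat m n) (b : vec m) (xs : vec n) : Prop :=
  X xs /\ feasible ineq A b xs /\
  forall x, X x -> feasible ineq A b x -> f xs <= f x.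

(* (x_{k+1}, lambda_{k+1}) is a saddle point on X x Lambda of
   L(x,lambda) - (1/eta_k) D_h(lambda, lambda_k) *)
Definition BALM_step (m n : nat) (ineq : bool) (f : vec n -> R) (X : vec n -> Prop)
  (A : mat m n) (b : vec m) (h : vec m -> R) (gh : vec m -> vec m)
  (eta : R) (lk : vec m) (x1 : vec n) (l1 : vec m) : Prop :=
  let Phi := fun x l => Lag f A b x l - / eta * Dh h gh l lk in
  X x1 /\ Lambda ineq l1 /\
  (forall x l, X x -> Lambda ineq l -> Phi x1 l <= Phi x1 l1 /\ Phi x1 l1 <= Phi x l1).

Definition eta_sum (eta : nat -> R) (T : nat) : R := \big[Rplus/0]_(k < T) eta k.
Definition wavg (p : nat) (eta : nat -> R) (z : nat -> vec p) (T : nat) : vec p :=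
  fun i => (\big[Rplus/0]_(k < T) (eta k * z k.+1 i)) / eta_sum eta T.

From HB Require Import structures.
From mathcomp Require Import all_boot.
From Stdlib Require Import Reals Lra Classical FunctionalExtensionality.
Set Implicit Arguments.
Unset Strict Implicit.
Open Scope R_scope.

(* Maximality of lambda_{k+1} gives the first-order condition
   eta_k <A x_{k+1} - b, l - lambda_{k+1}> <= <grad h(lambda_{k+1}) - grad h(lambda_k), l - lambda_{k+1}>,
   and the three-point identity for Bregman divergences turns its right-hand side into
   D_h(l,lambda_k) - D_h(l,lambda_{k+1}) - D_h(lambda_{k+1},lambda_k).  Together with minimality
   of x_{k+1} this gives
   eta_k (L(x_{k+1},l) - L(x,lambda_{k+1})) <= D_h(l,lambda_k) - D_h(l,lambda_{k+1}),
   which telescopes.  Since L(.,l) is convex and L(x,.) affine, the averaged iterates inherit the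
   bound.  For the second inequality take x = x*, where <lambda~_T, A x* - b> <= 0 by feasibility. *)

Lemma Rplus_associative : associative Rplus. Proof. by move=> *; ring. Qed.
Lemma Rmult_associative : associative Rmult. Proof. by move=> *; ring. Qed.
HB.instance Definition _ :=
  Monoid.isComLaw.Build R 0 Rplus Rplus_associative Rplus_comm Rplus_0_l.
HB.instance Definition _ :=
  Monoid.isComLaw.Build R 1 Rmult Rmult_associative Rmult_comm Rmult_1_l.
HB.instance Definition _ := Monoid.isMulLaw.Build R 0 Rmult Rmult_0_l Rmult_0_r.
HB.instance Definition _ :=
  Monoid.isAddLaw.Build R Rmult Rplus Rmult_plus_distr_r Rmult_plus_distr_l.

Lemma big_Rminus n (F G : 'I_n -> R) :
  \big[Rplus/0]_(i < n) (F i - G i)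
  = \big[Rplus/0]_(i < n) F i - \big[Rplus/0]_(i < n) G i.
Proof.
rewrite /Rminus big_split /=; congr (_ + _).
rewrite (eq_bigr (fun i => -1 * G i)); last by move=> i _; ring.
by rewrite -big_distrr /=; ring.
Qed.

Lemma big_Rminus_mul n (c F G : 'I_n -> R) :
  \big[Rplus/0]_(i < n) (c i * (F i - G i))
  = \big[Rplus/0]_(i < n) (c i * F i) - \big[Rplus/0]_(i < n) (c i * G i).
Proof. by rewrite -big_Rminus; apply: eq_bigr => i _; ring. Qed.

Lemma le_of_le_add_eps a b : (forall eps, 0 < eps -> a <= b + eps) -> a <= b.
Proof.
move=> H; apply: Rnot_lt_le => Hlt.
by have := H ((a - b) / 2) ltac:(lra); lra.
Qed.

Lemma Rabs_le_between z c : Rabs z <= c -> - c <= z <= c.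
Proof. by split_Rabs; lra. Qed.

Definition vcomb n (t : R) (x y : vec n) : vec n := fun i => t * x i + (1 - t) * y i.

Lemma vsub_vcomb n t (x y : vec n) : vsub (vcomb t x y) y = (fun i => t * vsub x y i).
Proof. by apply: functional_extensionality => i; rewrite /vcomb /vsub; ring. Qed.

Lemma dot_comm n (u v : vec n) : dot u v = dot v u.
Proof. by apply: eq_bigr => i _; ring. Qed.

Lemma dot_sub_r n (a u w : vec n) : dot a (vsub u w) = dot a u - dot a w.
Proof. by rewrite /dot /vsub -big_Rminus; apply: eq_bigr => i _; ring. Qed.

Lemma dot_sub_l n (a u w : vec n) : dot (vsub u w) a = dot u a - dot w a.
Proof. by rewrite dot_comm dot_sub_r !(dot_comm a). Qed.

Lemma dot_scale_r n (a u : vec n) t : dot a (fun i => t * u i) = t * dot a u.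
Proof. by rewrite /dot big_distrr /=; apply: eq_bigr => i _; ring. Qed.

Lemma dot_scale_l n (a u : vec n) t : dot (fun i => t * u i) a = t * dot u a.
Proof. by rewrite dot_comm dot_scale_r dot_comm. Qed.

Lemma dot_vcomb_r n (a x y : vec n) t :
  dot a (vcomb t x y) = t * dot a x + (1 - t) * dot a y.
Proof.
rewrite /dot !big_distrr -big_split /=.
by apply: eq_bigr => i _; rewrite /vcomb; ring.
Qed.

Lemma dot_self_ge0 n (u : vec n) : 0 <= dot u u.
Proof. by apply: big_ind => //; [lra | move=> *; lra | move=> i _; nra]. Qed.

Lemma vnorm_scale n (u : vec n) t : 0 <= t -> vnorm (fun i => t * u i) = t * vnorm u.
Proof.
move=> Ht; rewrite /vnorm dot_scale_l dot_scale_r -Rmult_assoc.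
by rewrite sqrt_mult; [rewrite sqrt_square | nra | apply: dot_self_ge0].
Qed.

Lemma Lambda_convex m ineq : vconvex_set (@Lambda m ineq).
Proof.
move=> x y t; rewrite /Lambda; case: ineq => // Hx Hy Ht i.
by have := Hx i; have := Hy i; nra.
Qed.

Lemma dot_feasible_nonpos m n ineq (A : mat m n) b (l : vec m) x :
  Lambda ineq l -> feasible ineq A b x -> dot l (vsub (mulv A x) b) <= 0.
Proof.
move=> Ll Fx; apply: (big_ind (fun r => r <= 0)) => [|u v|i _]; [lra | lra | ].
move: Ll Fx; rewrite /Lambda /feasible /vsub; case: ineq => Ll Fx.
  by have := Ll i; have := Fx i; nra.
by rewrite Fx; lra.
Qed.

Lemma Dh_three_point m (h : vec m -> R) gh (l lk l1 : vec m) :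
  Dh h gh l lk - Dh h gh l l1
  = Dh h gh l1 lk + dot (vsub (gh l1) (gh lk)) (vsub l l1).
Proof. by rewrite /Dh dot_sub_l !dot_sub_r; ring. Qed.

Section Gradient.

Variables (m : nat) (S : vec m -> Prop) (h : vec m -> R) (gh : vec m -> vec m).
Hypotheses (S_convex : vconvex_set S) (h_grad : gradient_on S h gh).

Lemma gradient_on_segment p q : S p -> S q -> forall eps, 0 < eps ->
  exists t, 0 < t < 1 /\
  Rabs (h (vcomb t q p) - h p - t * dot (gh p) (vsub q p)) <= t * eps.
Proof.
move=> Sp Sq eps Heps.
set N := vnorm (vsub q p).
have N_ge0 : 0 <= N by apply: sqrt_pos.
have [d [Hd Happrox]] := h_grad Sp (Rdiv_lt_0_compat _ _ Heps (ltac:(lra) : 0 < N + 1)).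
set t := Rmin (1 / 2) (d / (2 * (N + 1))).
have t_pos : 0 < t by apply: Rmin_glb_lt; [lra | apply: Rdiv_lt_0_compat; lra].
have t_le_half : t <= 1 / 2 by apply: Rmin_l.
have t_le_d : t * (2 * (N + 1)) <= d.
  have : t <= d / (2 * (N + 1)) by apply: Rmin_r.
  have : d / (2 * (N + 1)) * (2 * (N + 1)) = d by field; lra.
  by nra.
exists t; split; first lra.
have Sc : S (vcomb t q p) by apply: S_convex => //; lra.
have Nc : vnorm (vsub (vcomb t q p) p) = t * N by rewrite vsub_vcomb vnorm_scale //; lra.
have := Happrox _ Sc; rewrite Nc vsub_vcomb dot_scale_r => H.
apply: Rle_trans (H ltac:(nra)) _.
have -> : eps / (N + 1) * (t * N) = t * eps * (N / (N + 1)) by field; lra.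
have : N / (N + 1) <= 1.
  by apply: (Rmult_le_reg_r (N + 1)); [lra | rewrite /Rdiv Rmult_assoc Rinv_l; lra].
have : 0 < t * eps by nra.
by nra.
Qed.

Lemma le_gradient_of_slope_ge p q c : S p -> S q ->
  (forall t, 0 < t < 1 -> t * c <= h (vcomb t q p) - h p) ->
  c <= dot (gh p) (vsub q p).
Proof.
move=> Sp Sq Hslope; apply: le_of_le_add_eps => eps Heps.
have [t [Ht /Rabs_le_between Happrox]] := gradient_on_segment Sp Sq Heps.
by have := Hslope t Ht; nra.
Qed.

Lemma gradient_le_of_slope_le p q c : S p -> S q ->
  (forall t, 0 < t < 1 -> h (vcomb t q p) - h p <= t * c) ->
  dot (gh p) (vsub q p) <= c.
Proof.
move=> Sp Sq Hslope; apply: le_of_le_add_eps => eps Heps.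
have [t [Ht /Rabs_le_between Happrox]] := gradient_on_segment Sp Sq Heps.
by have := Hslope t Ht; nra.
Qed.

Lemma Dh_ge0 p q : strictly_convex_on S h -> S p -> S q -> 0 <= Dh h gh q p.
Proof.
move=> h_sconvex Sp Sq; rewrite /Dh.
case: (classic (q = p)) => [-> | q_neq_p]; first by rewrite dot_sub_r; lra.
suff : dot (gh p) (vsub q p) <= h q - h p by lra.
apply: gradient_le_of_slope_le => // t Ht.
by have := h_sconvex q p t Sq Sp q_neq_p Ht; rewrite -/(vcomb t q p); lra.
Qed.

End Gradient.

Section WeightedAverage.

Variable eta : nat -> R.
Hypothesis eta_pos : forall k, 0 < eta k.

Lemma eta_sum_pos T : (0 < T)%nat -> 0 < eta_sum eta T.
Proof.
case: T => // T _; rewrite /eta_sum big_ord_recr /=.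
apply: Rplus_le_lt_0_compat (eta_pos T).
by apply: big_ind => [|u v|k _]; [lra | lra | have := eta_pos k; lra].
Qed.

Lemma dot_wavg_r p (u : vec p) (z : nat -> vec p) T :
  dot u (wavg eta z T) = (\big[Rplus/0]_(k < T) (eta k * dot u (z k.+1))) / eta_sum eta T.
Proof.
rewrite /dot /wavg /Rdiv big_distrl /=.
under eq_bigr => i _ do rewrite big_distrl big_distrr /=.
rewrite exchange_big /=; apply: eq_bigr => k _.
by rewrite big_distrr big_distrl /=; apply: eq_bigr => i _; ring.
Qed.

Lemma dot_wavg_l p (u : vec p) (z : nat -> vec p) T :
  dot (wavg eta z T) u = (\big[Rplus/0]_(k < T) (eta k * dot (z k.+1) u)) / eta_sum eta T.
Proof.
by rewrite dot_comm dot_wavg_r; congr (_ / _); apply: eq_bigr => k _; rewrite dot_comm.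
Qed.

Lemma affine_wavg m n (A : mat m n) (b : vec m) (x : nat -> vec n) T : (0 < T)%nat ->
  vsub (mulv A (wavg eta x T)) b = wavg eta (fun k => vsub (mulv A (x k)) b) T.
Proof.
move=> T_pos; have := eta_sum_pos T_pos => S_pos.
apply: functional_extensionality => i.
change (mulv A (wavg eta x T) i - b i = wavg eta (fun k => vsub (mulv A (x k)) b) T i).
rewrite -[mulv A _ i]/(dot (A i) (wavg eta x T)) dot_wavg_r /wavg /vsub.
under [in RHS]eq_bigr => k _ do rewrite Rmult_minus_distr_l.
rewrite big_Rminus -big_distrl /= -/(eta_sum eta T) /mulv /dot.
by field; lra.
Qed.

Lemma wavg_Lambda m ineq (z : nat -> vec m) T : (0 < T)%nat ->
  (forall k, Lambda ineq (z k)) -> Lambda ineq (wavg eta z T).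
Proof.
move=> T_pos; have := eta_sum_pos T_pos => S_pos.
rewrite /Lambda /wavg; case: ineq => // Hz i.
apply: Rmult_le_pos; last by apply: Rlt_le; apply: Rinv_0_lt_compat.
apply: big_ind => [|u v|k _]; [lra | lra | ].
by apply: Rmult_le_pos; [apply: Rlt_le | apply: Hz].
Qed.

Lemma convex_wavg n (f : vec n -> R) (x : nat -> vec n) T : convex_fun f -> (0 < T)%nat ->
  eta_sum eta T * f (wavg eta x T) <= \big[Rplus/0]_(k < T) (eta k * f (x k.+1)).
Proof.
move=> f_convex; case: T => // T _; elim: T => [|T IH].
  have -> : wavg eta x 1%nat = x 1%nat.
    apply: functional_extensionality => i; rewrite /wavg /eta_sum !big_ord1 /=.
    by field; have := eta_pos 0%nat; lra.
  by rewrite /eta_sum !big_ord1 /=; lra.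
have S_pos := eta_sum_pos (ltn0Sn T).
set S := eta_sum eta T.+1 in IH S_pos *.
have S_succ : eta_sum eta T.+2 = S + eta T.+1 by rewrite /eta_sum big_ord_recr.
have eta_T_pos := eta_pos T.+1.
set t := S / (S + eta T.+1).
have wavg_succ : wavg eta x T.+2 = vcomb t (wavg eta x T.+1) (x T.+2).
  apply: functional_extensionality => i; rewrite /vcomb /wavg S_succ /t big_ord_recr /=.
  by rewrite -/S; field; lra.
have t_unit : 0 <= t <= 1.
  have : (S + eta T.+1) * t = S by rewrite /t; field; lra.
  by nra.
have := f_convex (wavg eta x T.+1) (x T.+2) t t_unit; rewrite -/(vcomb _ _ _) -wavg_succ.
move=> Hconv; rewrite big_ord_recr /= S_succ.
have S_succ_ge0 : 0 <= S + eta T.+1 by lra.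
apply: Rle_trans (Rmult_le_compat_l _ _ _ S_succ_ge0 Hconv) _.
have -> : (S + eta T.+1) * (t * f (wavg eta x T.+1) + (1 - t) * f (x T.+2))
          = S * f (wavg eta x T.+1) + eta T.+1 * f (x T.+2) by rewrite /t; field; lra.
by apply: Rplus_le_compat_r.
Qed.

End WeightedAverage.

Section LagrangianAverage.

Variables (m n : nat) (f : vec n -> R) (A : mat m n) (b : vec m) (eta : nat -> R) (T : nat).
Hypotheses (eta_pos : forall k, 0 < eta k) (T_pos : (0 < T)%nat).

Local Notation L := (Lag f A b).

Lemma Lag_wavg_l x l : convex_fun f ->
  eta_sum eta T * L (wavg eta x T) l <= \big[Rplus/0]_(k < T) (eta k * L (x k.+1) l).
Proof.
move=> f_convex.
have S_pos := eta_sum_pos eta_pos T_pos.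
have Jensen := convex_wavg eta_pos x f_convex T_pos.
rewrite /Lag affine_wavg // dot_wavg_r /=.
under [X in _ <= X]eq_bigr => k _ do rewrite Rmult_plus_distr_l.
rewrite big_split /= Rmult_plus_distr_l.
set s := \big[Rplus/0]_(k < T) _.
have -> : eta_sum eta T * (s / eta_sum eta T) = s by field; lra.
exact: Rplus_le_compat_r.
Qed.

Lemma Lag_wavg_r xx (lam : nat -> vec m) :
  eta_sum eta T * L xx (wavg eta lam T) = \big[Rplus/0]_(k < T) (eta k * L xx (lam k.+1)).
Proof.
have S_pos := eta_sum_pos eta_pos T_pos.
rewrite /Lag dot_wavg_l.
under [in RHS]eq_bigr => k _ do rewrite Rmult_plus_distr_l (Rmult_comm (eta k) (f xx)).
rewrite big_split /= -big_distrr /= -/(eta_sum eta T).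
by field; lra.
Qed.

End LagrangianAverage.

Lemma Lag_sub_r m n (f : vec n -> R) (A : mat m n) b x (l l' : vec m) :
  Lag f A b x l - Lag f A b x l' = dot (vsub l l') (vsub (mulv A x) b).
Proof. by rewrite /Lag dot_sub_l; ring. Qed.

Section BALMStep.

Variables (m n : nat) (ineq : bool) (f : vec n -> R) (X : vec n -> Prop)
  (A : mat m n) (b : vec m) (h : vec m -> R) (gh : vec m -> vec m).
Hypotheses (h_sconvex : strictly_convex_on (Lambda ineq) h)
  (h_grad : gradient_on (Lambda ineq) h gh).

Local Notation L := (Lag f A b).
Local Notation D := (Dh h gh).

Lemma BALM_step_dual_optimality e lk x1 l1 l : 0 < e ->
  BALM_step ineq f X A b h gh e lk x1 l1 -> Lambda ineq l ->
  e * (L x1 l - L x1 l1) <= dot (vsub (gh l1) (gh lk)) (vsub l l1).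
Proof.
move=> He [Xx1 [Ll1 Hsaddle]] Ll; rewrite dot_sub_l.
suff : e * (L x1 l - L x1 l1) + dot (gh lk) (vsub l l1) <= dot (gh l1) (vsub l l1) by lra.
apply: (le_gradient_of_slope_ge (@Lambda_convex m ineq) h_grad) => // t Ht.
have Lc : Lambda ineq (vcomb t l l1) by apply: Lambda_convex => //; lra.
have := (Hsaddle x1 _ Xx1 Lc).1 => /= Hmax.
have EL : L x1 (vcomb t l l1) - L x1 l1 = t * (L x1 l - L x1 l1).
  by rewrite !Lag_sub_r vsub_vcomb dot_scale_l.
have ED : D (vcomb t l l1) lk - D l1 lk
          = h (vcomb t l l1) - h l1 - t * dot (gh lk) (vsub l l1).
  by rewrite /Dh !dot_sub_r dot_vcomb_r; ring.
have : e * (L x1 (vcomb t l l1) - L x1 l1) <= D (vcomb t l l1) lk - D l1 lk.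
  have -> : D (vcomb t l l1) lk - D l1 lk
            = e * (/ e * (D (vcomb t l l1) lk - D l1 lk)) by field; lra.
  by apply: Rmult_le_compat_l; lra.
by rewrite EL ED; lra.
Qed.

Lemma BALM_step_ineq e lk x1 l1 x l : 0 < e -> Lambda ineq lk ->
  BALM_step ineq f X A b h gh e lk x1 l1 -> X x -> Lambda ineq l ->
  e * (L x1 l - L x l1) <= D l lk - D l l1.
Proof.
move=> He Llk Hstep Xx Ll.
have Hdual := BALM_step_dual_optimality He Hstep Ll.
case: Hstep => _ [Ll1 Hsaddle].
have Hprimal : L x1 l1 <= L x l1 by have := (Hsaddle x l Xx Ll).2 => /=; lra.
have := Dh_ge0 (@Lambda_convex m ineq) h_grad h_sconvex Llk Ll1.
by rewrite Dh_three_point; nra.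
Qed.

Variables (eta : nat -> R) (x : nat -> vec n) (lam : nat -> vec m).
Hypotheses (eta_pos : forall k, 0 < eta k) (lam0_in : Lambda ineq (lam 0%nat))
  (BALM : forall k, BALM_step ineq f X A b h gh (eta k) (lam k) (x k.+1) (lam k.+1)).

Lemma BALM_iterates_in_Lambda k : Lambda ineq (lam k).
Proof. by case: k => // k; case: (BALM k) => _ []. Qed.

Lemma BALM_telescope xx l : X xx -> Lambda ineq l -> forall T,
  \big[Rplus/0]_(k < T) (eta k * (L (x k.+1) l - L xx (lam k.+1)))
  <= D l (lam 0%nat) - D l (lam T).
Proof.
move=> Xxx Ll; elim=> [|T IH]; first by rewrite big_ord0; lra.
rewrite big_ord_recr /=.
have Hstep := BALM_step_ineq (eta_pos T) (BALM_iterates_in_Lambda T) (BALM T) Xxx Ll.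
by apply: Rle_trans (Rplus_le_compat _ _ _ _ IH Hstep) _; lra.
Qed.

Lemma BALM_saddle_gap T xx l : convex_fun f -> (0 < T)%nat -> X xx -> Lambda ineq l ->
  L (wavg eta x T) l - L xx (wavg eta lam T) <= D l (lam 0%nat) / eta_sum eta T.
Proof.
move=> f_convex T_pos Xxx Ll.
have S_pos := eta_sum_pos eta_pos T_pos.
apply: (Rmult_le_reg_l (eta_sum eta T)) => //.
have -> : eta_sum eta T * (D l (lam 0%nat) / eta_sum eta T) = D l (lam 0%nat) by field; lra.
rewrite Rmult_minus_distr_l Lag_wavg_r //.
have := Lag_wavg_l A b eta_pos T_pos x l f_convex.
have := BALM_telescope Xxx Ll T; rewrite big_Rminus_mul.
have := Dh_ge0 (@Lambda_convex m ineq) h_grad h_sconvex (BALM_iterates_in_Lambda T) Ll.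
by lra.
Qed.

Lemma BALM_primal_gap T xs l : convex_fun f -> (0 < T)%nat ->
  primal_optimal ineq f X A b xs -> Lambda ineq l ->
  f (wavg eta x T) - f xs + dot l (vsub (mulv A (wavg eta x T)) b)
  <= D l (lam 0%nat) / eta_sum eta T.
Proof.
move=> f_convex T_pos [Xxs [xs_feasible _]] Ll.
have := BALM_saddle_gap f_convex T_pos Xxs Ll; rewrite /Lag.
suff : dot (wavg eta lam T) (vsub (mulv A xs) b) <= 0 by lra.
apply: dot_feasible_nonpos xs_feasible.
by apply: (wavg_Lambda eta_pos) => //; apply: BALM_iterates_in_Lambda.
Qed.

End BALMStep.

Theorem lemma3 (m n : nat) (ineq : bool) (f : vec n -> R) (X : vec n -> Prop)
  (A : mat m n) (b : vec m) (h : vec m -> R) (gh : vec m -> vec m)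
  (eta : nat -> R) (x : nat -> vec n) (lam : nat -> vec m) (T : nat) :
  convex_fun f -> lsc_fun f -> coercive_on (fun _ => True) f ->
  vconvex_set X -> vclosed_set X ->
  strictly_convex_on (Lambda ineq) h -> coercive_on (Lambda ineq) h ->
  gradient_on (Lambda ineq) h gh -> vcontinuous_on (Lambda ineq) gh ->
  (forall k, 0 < eta k) ->
  Lambda ineq (lam 0%nat) ->
  (forall k, BALM_step ineq f X A b h gh (eta k) (lam k) (x k.+1) (lam k.+1)) ->
  (1 <= T)%nat ->
  (forall xx l, X xx -> Lambda ineq l ->
     Lag f A b (wavg eta x T) l - Lag f A b xx (wavg eta lam T)
       <= Dh h gh l (lam 0%nat) / eta_sum eta T) /\
  (forall xs, primal_optimal ineq f X A b xs -> forall l, Lambda ineq l ->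
     f (wavg eta x T) - f xs + dot l (vsub (mulv A (wavg eta x T)) b)
       <= Dh h gh l (lam 0%nat) / eta_sum eta T).
Proof.
(* Closedness, coercivity and continuity only guarantee that the iterates exist, which the
   BALM hypothesis already assumes. *)
move=> f_convex _ _ _ _ h_sconvex _ h_grad _ eta_pos lam0_in BALM T_pos.
split=> [xx l Xxx Ll | xs xs_opt l Ll].
- exact (BALM_saddle_gap h_sconvex h_grad eta_pos lam0_in BALM f_convex T_pos Xxx Ll).
- exact (BALM_primal_gap h_sconvex h_grad eta_pos lam0_in BALM f_convex T_pos xs_opt Ll).
Qed.
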